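(* Let $m,n\ge0$ with $m+n\ge1$ and $r,s\ge 0$ with $r+s\ge 1$. Then the Lie superalgebra $H(m,n)\oplus A(r\mid s)$ is capable if and only if $m=1$ and $n=0$.
   Context: All algebras are over a field $\mathbb{F}$ of characteristic $\neq 2,3$. $A(r\mid s)$ is the abelian Lie superalgebra of dimension $(r\mid s)$. $H(m,n)$ is the Lie superalgebra with even basis $x_1,\dots,x_{2m},z$, odd basis $y_1,\dots,y_n$, and nonzero brackets $[x_i,x_{m+i}]=z$ ($1\le i\le m$), $[y_j,y_j]=z$ ($1\le j\le n$). $\oplus$ is the direct sum of Lie superalgebras. A Lie superalgebra $L$ is capable if $L\cong H/Z(H)$ for some Lie superalgebra $H$. *)

From HB Require Import structures.
From mathcomp Require Import all_boot all_order all_algebra.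
Set Implicit Arguments. Unset Strict Implicit. Unset Printing Implicit Defensive.
Import Order.TTheory GRing.Theory Num.Theory.
Local Open Scope ring_scope.

(* Data of a Lie superalgebra L = L0 (+) L1 over F, given by its even part,
   odd part and the three homogeneous components of the bracket:
     b00 : L0 x L0 -> L0,  b01 : L0 x L1 -> L1 ([x,u]),  b11 : L1 x L1 -> L0.
   The remaining component [u,x] = -[x,u] (u odd, x even) is determined by
   super-antisymmetry. *)
Record lsData (F : fieldType) := LSData {
  ev : lmodType F;
  od : lmodType F;
  b00 : ev -> ev -> ev;
  b01 : ev -> od -> od;
  b11 : od -> od -> ev }.

Definition bilin (F : fieldType) (U V W : lmodType F) (f : U -> V -> W) : Prop :=
  (forall (a : F) x x' y, f (a *: x + x') y = a *: f x y + f x' y) /\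
  (forall (a : F) x y y', f x (a *: y + y') = a *: f x y + f x y').

Definition lin (F : fieldType) (U V : lmodType F) (f : U -> V) : Prop :=
  forall (a : F) x y, f (a *: x + y) = a *: f x + f y.

Definition isLieSuper (F : fieldType) (L : lsData F) : Prop :=
  bilin (@b00 F L) /\ bilin (@b01 F L) /\ bilin (@b11 F L) /\
      (forall x y : ev L, b00 x y = - b00 y x) /\
      (forall u v, @b11 F L u v = b11 v u) /\
      (forall x y z, @b00 F L x (b00 y z) + b00 y (b00 z x) + b00 z (b00 x y) = 0) /\
      (forall x y (u : od L), b01 x (b01 y u) - b01 y (b01 x u) = b01 (b00 x y) u) /\
      (forall x (u v : od L), b00 x (b11 u v) = b11 (b01 x u) v + b11 u (b01 x v)) /\
      (forall (u v w : od L),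
         b01 (b11 v w) u + b01 (b11 w u) v + b01 (b11 u v) w = 0).

Definition center_ev (F : fieldType) (L : lsData F) (x : ev L) : Prop :=
  (forall y, b00 x y = 0) /\ (forall u : od L, b01 x u = 0).
Definition center_od (F : fieldType) (L : lsData F) (u : od L) : Prop :=
  (forall x : ev L, b01 x u = 0) /\ (forall v, b11 u v = 0).

(* L is capable iff L ~= H / Z(H) for some Lie superalgebra H over F,
   i.e. (first isomorphism theorem) there is a surjective homomorphism of
   Lie superalgebras H -> L (even and odd parts) whose kernel is Z(H). *)
Definition capable (F : fieldType) (L : lsData F) : Prop :=
  exists (H : lsData F), isLieSuper H /\
  exists (f0 : ev H -> ev L) (f1 : od H -> od L),
    lin f0 /\ lin f1 /\
    (forall y, exists x, f0 x = y) /\ (forall v, exists u, f1 u = v) /\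
    (forall x y, f0 (b00 x y) = b00 (f0 x) (f0 y)) /\
    (forall x u, f1 (b01 x u) = b01 (f0 x) (f1 u)) /\
    (forall u v, f0 (b11 u v) = b11 (f1 u) (f1 v)) /\
    (forall x, f0 x = 0 <-> center_ev x) /\
    (forall u, f1 u = 0 <-> center_od u).

Definition lsSum (F : fieldType) (A B : lsData F) : lsData F :=
  @LSData F (ev A * ev B)%type (od A * od B)%type
    (fun x y => (b00 x.1 y.1, b00 x.2 y.2))
    (fun x u => (b01 x.1 u.1, b01 x.2 u.2))
    (fun u v => (b11 u.1 v.1, b11 u.2 v.2)).

(* Heisenberg superalgebra H(m,n): even part F^(2m+1) with coordinates
   x_1..x_2m at indices 0..2m-1 and z at index 2m (= ord_max); odd part F^n
   with basis y_1..y_n.  Brackets [x_i,x_{m+i}] = z, [y_j,y_j] = z. *)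
Definition zvec (F : fieldType) (m : nat) (c : F) : 'rV[F]_(m.*2).+1 :=
  c *: delta_mx 0 ord_max.

Definition heis (F : fieldType) (m n : nat) : lsData F :=
  @LSData F 'rV[F]_(m.*2).+1 'rV[F]_n
    (fun a b => zvec m (\sum_(i < m)
        (a 0 (inord i) * b 0 (inord (m + i)) - a 0 (inord (m + i)) * b 0 (inord i))))
    (fun _ _ => 0)
    (fun u v => zvec m (\sum_(j < n) u 0 j * v 0 j)).

Definition abel (F : fieldType) (r s : nat) : lsData F :=
  @LSData F 'rV[F]_r 'rV[F]_s (fun _ _ => 0) (fun _ _ => 0) (fun _ _ => 0).

(* If L = H / Z(H), the bracket of H only depends on the classes in L, so a
   bracket in H whose image in L vanishes is central in H.  Through the super
   Jacobi identity this makes the lift of z central, i.e. z = 0 in L, as soon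
   as one of the following configurations exists in L.
   - n >= 1: u = y_1 has [u,u] = z, [L_0,u] = 0 and L_1 = F u + C_{L_1}(u);
     the lift of [u,u] commutes with the lifts of u (using 3 != 0) and of
     C_{L_1}(u), and with H_0 because [H_0,U] lies in Z(H) for the lift U.
   - m >= 2: z = [x_1,x_{m+1}] = [x_2,x_{m+2}]; the lift of [x_2,x_{m+2}]
     commutes with the lifts of x_1 and x_{m+1}, and agrees up to Z(H) with the
     lift of [x_1,x_{m+1}], which commutes with the lifts of the common
     centraliser C of x_1 and x_{m+1}; and L_0 = F x_1 + F x_{m+1} + C.
   Conversely H(1,0) + A(r|s) is F x_1 acting on an abelian ideal W, and it is
   the central quotient of F x_1 acting on W + W by (w, w') |-> ([x_1,w], w). *)

From HB Require Import structures.
From mathcomp Require Import all_boot all_order all_algebra ring zify.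
Import GRing.Theory.
Set Implicit Arguments.
Unset Strict Implicit.
Unset Printing Implicit Defensive.
Local Open Scope ring_scope.

Section Linear.
Variables (F : fieldType) (U V : lmodType F) (f : U -> V).
Hypothesis f_lin : lin f.

Lemma lin0 : f 0 = 0.
Proof.
have := f_lin 1 0 0; rewrite scaler0 addr0 scale1r => e.
by apply: (@addrI _ (f 0)); rewrite addr0 -e.
Qed.

Lemma linZ a x : f (a *: x) = a *: f x.
Proof. by rewrite -[a *: x]addr0 f_lin lin0 addr0. Qed.

Lemma linD x y : f (x + y) = f x + f y.
Proof. by rewrite -[x]scale1r f_lin !scale1r. Qed.

Lemma linN x : f (- x) = - f x.
Proof. by rewrite -scaleN1r linZ scaleN1r. Qed.

Lemma linB x y : f (x - y) = f x - f y.
Proof. by rewrite linD linN. Qed.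
End Linear.

Lemma bilin_linl (F : fieldType) (U V W : lmodType F) (f : U -> V -> W) y :
  bilin f -> lin (f^~ y).
Proof. by move=> [fl _] a x x'; apply: fl. Qed.

Section LieSuperAxioms.
Variables (F : fieldType) (H : lsData F).
Hypothesis H_lie : isLieSuper H.

Lemma b00_bilin : bilin (@b00 F H). Proof. by case: H_lie. Qed.
Lemma b01_bilin : bilin (@b01 F H). Proof. by case: H_lie => _ []. Qed.

Lemma b00_antisym x y : b00 x y = - @b00 F H y x.
Proof. by case: H_lie => _ [_ [_ []]]. Qed.

Lemma b11_sym u v : b11 u v = @b11 F H v u.
Proof. by case: H_lie => _ [_ [_ [_ []]]]. Qed.

Lemma jacobi_eee x y z :
  @b00 F H x (b00 y z) + b00 y (b00 z x) + b00 z (b00 x y) = 0.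
Proof. by case: H_lie => _ [_ [_ [_ [_ []]]]]. Qed.

Lemma jacobi_eeo x y (u : od H) :
  b01 x (b01 y u) - b01 y (b01 x u) = b01 (b00 x y) u.
Proof. by case: H_lie => _ [_ [_ [_ [_ [_ []]]]]]. Qed.

Lemma jacobi_eoo x (u v : od H) :
  b00 x (b11 u v) = b11 (b01 x u) v + b11 u (b01 x v).
Proof. by case: H_lie => _ [_ [_ [_ [_ [_ [_ []]]]]]]. Qed.

Lemma jacobi_ooo (u v w : od H) :
  b01 (b11 v w) u + b01 (b11 w u) v + b01 (b11 u v) w = 0.
Proof. by case: H_lie => _ [_ [_ [_ [_ [_ [_ [_ ]]]]]]]. Qed.
End LieSuperAxioms.

Section CentralQuotient.
Variables (F : fieldType) (H L : lsData F).
Hypothesis H_lie : isLieSuper H.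
Variables (f0 : ev H -> ev L) (f1 : od H -> od L).
Hypotheses (f0_lin : lin f0) (f1_lin : lin f1).
Hypotheses (f0_b00 : forall x y, f0 (b00 x y) = b00 (f0 x) (f0 y))
  (f1_b01 : forall x u, f1 (b01 x u) = b01 (f0 x) (f1 u))
  (f0_b11 : forall u v, f0 (b11 u v) = b11 (f1 u) (f1 v)).
Hypotheses (ker_f0 : forall x, f0 x = 0 <-> center_ev x)
  (ker_f1 : forall u, f1 u = 0 <-> center_od u).

Lemma b00_congr_l x x' y : f0 x = f0 x' -> b00 x y = b00 x' y.
Proof.
move=> e; have /ker_f0[central _] : f0 (x - x') = 0.
  by rewrite (linB f0_lin) e subrr.
by apply/eqP; rewrite -subr_eq0 -(linB (bilin_linl y (b00_bilin H_lie))) central.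
Qed.

Lemma b00_b00_eq0 x y z :
  b00 (f0 x) (f0 z) = 0 -> b00 (f0 y) (f0 z) = 0 -> b00 (b00 x y) z = 0.
Proof.
rewrite -!f0_b00 => /ker_f0[xz _] /ker_f0[yz _].
have b00N := linN (bilin_linl _ (b00_bilin H_lie)).
have := jacobi_eee H_lie x y z.
rewrite (b00_antisym H_lie x) yz (b00_antisym H_lie y) (b00_antisym H_lie z x).
rewrite b00N xz !oppr0 !add0r => zxy.
by rewrite b00_antisym // zxy oppr0.
Qed.

Lemma b01_b00_eq0 x y u :
  b01 (f0 x) (f1 u) = 0 -> b01 (f0 y) (f1 u) = 0 -> b01 (b00 x y) u = 0.
Proof.
rewrite -!f1_b01 => /ker_f1[xu _] /ker_f1[yu _].
by rewrite -(jacobi_eeo H_lie) xu yu subrr.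
Qed.

Lemma center_ev_b11 u :
  3%:R != 0 :> F -> (forall x, b01 x (f1 u) = 0) ->
  (forall v, exists c, b11 (f1 u) (v - c *: f1 u) = 0) ->
  center_ev (b11 u u).
Proof.
move=> three_neq0 acts splits; split=> [y | v].
  have /ker_f1[_ yu] : f1 (b01 y u) = 0 by rewrite f1_b01.
  by rewrite b00_antisym // jacobi_eoo // yu (b11_sym H_lie u) yu addr0 oppr0.
have [c uv] := splits (f1 v).
set v' := v - c *: u.
have /ker_f0[_ uv'] : f0 (b11 u v') = 0.
  by rewrite f0_b11 /v' (linB f1_lin) (linZ f1_lin).
have zv' : b01 (b11 u u) v' = 0.
  by have := jacobi_ooo H_lie v' u u; rewrite (b11_sym H_lie v') !uv' !addr0; apply.
have zu : b01 (b11 u u) u = 0.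
  have : 3%:R *: b01 (b11 u u) u = 0.
    by rewrite scaler_nat mulrSr mulr2n jacobi_ooo.
  by move/eqP; rewrite scaler_eq0 (negbTE three_neq0) => /eqP.
have -> : v = c *: u + v' by rewrite addrC subrK.
by rewrite (proj2 (b01_bilin H_lie)) zu zv' scaler0 addr0.
Qed.

Lemma center_ev_b00 x1 x1' x2 x2' :
  b00 (f0 x1) (f0 x1') = b00 (f0 x2) (f0 x2') ->
  (forall y, exists a b, let y1 := y - (a *: f0 x1 + b *: f0 x1') in
     b00 (f0 x1) y1 = 0 /\ b00 (f0 x1') y1 = 0) ->
  [/\ b00 (f0 x2) (f0 x1) = 0, b00 (f0 x2') (f0 x1) = 0,
       b00 (f0 x2) (f0 x1') = 0 & b00 (f0 x2') (f0 x1') = 0] ->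
  (forall u, b01 (f0 x2) u = 0 /\ b01 (f0 x2') u = 0) ->
  center_ev (b00 x2 x2').
Proof.
move=> e12 splits [x21 x2'1 x21' x2'1'] acts; split=> [y | u]; last first.
  by have [x2u x2'u] := acts (f1 u); apply: b01_b00_eq0 x2u x2'u.
have [a [b [x1y1 x1'y1]]] := splits (f0 y).
set y1 := y - (a *: x1 + b *: x1').
have f0y1 : f0 y1 = f0 y - (a *: f0 x1 + b *: f0 x1').
  by rewrite /y1 (linB f0_lin) (linD f0_lin) !(linZ f0_lin).
have z_x1 : b00 (b00 x2 x2') x1 = 0 by apply: b00_b00_eq0.
have z_x1' : b00 (b00 x2 x2') x1' = 0 by apply: b00_b00_eq0.
have z_y1 : b00 (b00 x2 x2') y1 = 0.
  rewrite (@b00_congr_l _ (b00 x1 x1')) ?f0_b00 ?e12 //.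
  by apply: b00_b00_eq0; rewrite f0y1.
have -> : y = a *: x1 + (b *: x1' + y1) by rewrite /y1 addrA addrC subrK.
by rewrite !(proj2 (b00_bilin H_lie)) z_x1 z_x1' z_y1 !scaler0 !addr0.
Qed.
End CentralQuotient.

Lemma capable_b11_eq0 (F : fieldType) (L : lsData F) (u : od L) :
  capable L -> 3%:R != 0 :> F -> (forall x, b01 x u = 0) ->
  (forall v, exists c, b11 u (v - c *: u) = 0) -> b11 u u = 0.
Proof.
move=> [H [H_lie [f0 [f1 [f0_lin [f1_lin [_ [f1_surj cover]]]]]]]].
have [f0_b00 [f1_b01 [f0_b11 [ker_f0 ker_f1]]]] := cover.
have [U <-] := f1_surj u; move=> three_neq0 acts splits.
rewrite -f0_b11; apply/ker_f0.
exact: (center_ev_b11 H_lie f1_lin f1_b01 f0_b11 ker_f0 ker_f1).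
Qed.

Lemma capable_b00_eq0 (F : fieldType) (L : lsData F) (x1 x1' x2 x2' : ev L) :
  capable L ->
  b00 x1 x1' = b00 x2 x2' ->
  (forall y, exists a b, let y1 := y - (a *: x1 + b *: x1') in
     b00 x1 y1 = 0 /\ b00 x1' y1 = 0) ->
  [/\ b00 x2 x1 = 0, b00 x2' x1 = 0, b00 x2 x1' = 0 & b00 x2' x1' = 0] ->
  (forall u, b01 x2 u = 0 /\ b01 x2' u = 0) ->
  b00 x1 x1' = 0.
Proof.
move=> [H [H_lie [f0 [f1 [f0_lin [f1_lin [f0_surj [_ cover]]]]]]]].
have [f0_b00 [f1_b01 [f0_b11 [ker_f0 ker_f1]]]] := cover.
have [X1 <-] := f0_surj x1; have [X1' <-] := f0_surj x1'.
have [X2 <-] := f0_surj x2; have [X2' <-] := f0_surj x2'.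
move=> e12 splits commute acts.
rewrite e12 -f0_b00; apply/ker_f0.
exact: (center_ev_b00 H_lie f0_lin f0_b00 f1_b01 ker_f0 ker_f1 e12 splits commute acts).
Qed.

Lemma pair_ext (A B : Type) (x y : A * B) : x.1 = y.1 -> x.2 = y.2 -> x = y.
Proof. by case: x y => ? ? [? ?] /= -> ->. Qed.

Lemma pair_neq0 (F : fieldType) (U V : lmodType F) (a : U) (b : V) :
  a != 0 -> (a, b) != 0.
Proof. by move=> a_neq0; apply: contra_neq a_neq0 => /(congr1 fst). Qed.

HB.lock Definition hvec (F : fieldType) (m k : nat) : 'rV[F]_(m.*2).+1 :=
  delta_mx 0 (inord k).
Arguments hvec {F m} k.

Section Heisenberg.
Variables (F : fieldType) (m : nat).

Definition symp (a b : 'rV[F]_(m.*2).+1) : F := \sum_(i < m)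
  (a 0 (inord i) * b 0 (inord (m + i)) - a 0 (inord (m + i)) * b 0 (inord i)).

Lemma hvecE k j :
  (k <= m.*2)%N -> (j <= m.*2)%N -> @hvec F m k 0 (inord j) = (j == k)%:R.
Proof. by move=> k_le j_le; rewrite unlock mxE eqxx -val_eqE /= !inordK. Qed.

Lemma symp_antisym a b : symp a b = - symp b a.
Proof.
rewrite /symp -sumrN; apply: eq_bigr => i _.
by rewrite opprB [a _ _ * _]mulrC [a _ (inord (m + i)) * _]mulrC.
Qed.

Lemma symp_hvec k b : (k < m)%N -> symp (hvec k) b = b 0 (inord (m + k)).
Proof.
move=> k_lt; rewrite /symp (bigD1 (Ordinal k_lt)) //= big1 => [|i ik].
  rewrite !hvecE /= ?eqxx; try lia.
  have -> : (m + k == k)%N = false by lia.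
  by rewrite mul1r mul0r subr0 addr0.
have i_lt := ltn_ord i; rewrite !hvecE; try lia.
have -> : (m + i == k)%N = false by lia.
have -> : (val i == k) = false by apply: contraNF ik => /eqP ik; apply/eqP/val_inj.
by rewrite !mul0r subr0.
Qed.

Lemma symp_hvec_shift k b :
  (m <= k)%N -> (k < m.*2)%N -> symp (hvec k) b = - b 0 (inord (k - m)).
Proof.
move=> m_le k_lt; have [j -> j_lt] : exists2 j, k = (m + j)%N & (j < m)%N.
  by exists (k - m)%N; lia.
rewrite addKn /symp (bigD1 (Ordinal j_lt)) //= big1 => [|i ij].
  rewrite !hvecE /= ?eqxx; try lia.
  have -> : (j == m + j)%N = false by lia.
  by rewrite mul1r mul0r sub0r addr0.
have i_lt := ltn_ord i; rewrite !hvecE; try lia.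
have -> : (i == m + j :> nat) = false by lia.
have -> : (m + i == m + j) = false.
  by rewrite eqn_add2l; apply: contraNF ij => /eqP ij; apply/eqP/val_inj.
by rewrite !mul0r subr0.
Qed.

Lemma zvec_eq0 (c : F) : (zvec m c == 0) = (c == 0).
Proof.
apply/eqP/eqP => [/rowP/(_ ord_max)|->]; last by rewrite /zvec scale0r.
by rewrite !mxE !eqxx mulr1.
Qed.
End Heisenberg.

Section HeisenbergSum.
Variables (F : fieldType) (m n r s : nat).
Notation L := (lsSum (heis F m n) (abel F r s)).

Lemma heis_sum_b00 (x y : ev L) : b00 x y = (zvec m (symp x.1 y.1), 0).
Proof. by []. Qed.

Lemma heis_sum_not_capable_even : (2 <= m)%N -> ~ capable L.
Proof.
move=> m_ge2 capL.
have [m_neq0 m_neq1 m1_neq0 m1_neqm] :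
    [/\ (m == 0)%N = false, (1 == m)%N = false, (m + 1 == 0)%N = false
      & (m + 1 == m)%N = false] by split; lia.
pose e k : ev L := (hvec k, 0).
have b00_e k (y : ev L) : b00 (e k) y = (zvec m (symp (hvec k) y.1), 0) by [].
have e_eq0 c : c = 0 -> (zvec m c, 0) = 0 :> ev L by move->; rewrite /zvec scale0r.
have z01 : b00 (e 0%N) (e m) = (zvec m 1, 0).
  by rewrite b00_e symp_hvec ?hvecE ?addn0 ?eqxx //; lia.
have z12 : b00 (e 1%N) (e (m + 1)%N) = (zvec m 1, 0).
  by rewrite b00_e symp_hvec ?hvecE ?eqxx //; lia.
have splits (y : ev L) : exists a b, let y1 := y - (a *: e 0%N + b *: e m) in
    b00 (e 0%N) y1 = 0 /\ b00 (e m) y1 = 0.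
  exists (y.1 0 (inord 0)), (y.1 0 (inord m)); split; rewrite b00_e; apply: e_eq0.
    rewrite symp_hvec /= ?mxE ?addn0 ?hvecE ?m_neq0 ?eqxx; try lia.
    by rewrite mulr0 mulr1 add0r subrr.
  rewrite symp_hvec_shift /= ?mxE ?subnn ?hvecE ?(eq_sym 0%N) ?m_neq0 ?eqxx; try lia.
  by rewrite mulr1 mulr0 addr0 subrr oppr0.
have commute : [/\ b00 (e 1%N) (e 0%N) = 0, b00 (e (m + 1)%N) (e 0%N) = 0,
    b00 (e 1%N) (e m) = 0 & b00 (e (m + 1)%N) (e m) = 0].
  split; rewrite b00_e; apply: e_eq0.
  - by rewrite symp_hvec ?hvecE ?m1_neq0 //; lia.
  - by rewrite symp_hvec_shift ?addKn ?hvecE ?oppr0 //; lia.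
  - by rewrite symp_hvec ?hvecE ?m1_neqm //; lia.
  - by rewrite symp_hvec_shift ?addKn ?hvecE ?m_neq1 ?oppr0 //; lia.
have acts (u : od L) : b01 (e 1%N) u = 0 /\ b01 (e (m + 1)%N) u = 0 by [].
have /eqP := capable_b00_eq0 capL (etrans z01 (esym z12)) splits commute acts.
by rewrite z01; apply/negP/pair_neq0; rewrite zvec_eq0 oner_eq0.
Qed.

Lemma sum_delta_mul k (j0 : 'I_k) (v : 'rV[F]_k) :
  \sum_j (delta_mx 0 j0 : 'rV[F]_k) 0 j * v 0 j = v 0 j0.
Proof.
rewrite (bigD1 j0) //= mxE !eqxx mul1r big1 ?addr0 // => j /negbTE j_neq.
by rewrite mxE j_neq andbF mul0r.
Qed.

Lemma heis_sum_not_capable_odd : 3%:R != 0 :> F -> (0 < n)%N -> ~ capable L.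
Proof.
move=> three_neq0 n_gt0 capL.
pose u : od L := (delta_mx 0 (Ordinal n_gt0), 0).
have b11_u (v : od L) : b11 u v = (zvec m (v.1 0 (Ordinal n_gt0)), 0).
  by rewrite /= sum_delta_mul.
have acts (x : ev L) : b01 x u = 0 by [].
have splits (v : od L) : exists c, b11 u (v - c *: u) = 0.
  exists (v.1 0 (Ordinal n_gt0)).
  by rewrite b11_u /= !mxE !eqxx mulr1 subrr /zvec scale0r.
have /eqP := capable_b11_eq0 capL three_neq0 acts splits.
by rewrite b11_u /= mxE !eqxx; apply/negP/pair_neq0; rewrite zvec_eq0 oner_eq0.
Qed.
End HeisenbergSum.

Section Cover.
Variables (F : fieldType) (r s : nat).
Notation L := (lsSum (heis F 1 0) (abel F r s)).

Definition xcoord (x : ev L) : F := x.1 0 (inord 0).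

(* For first components x = t x_1 + w and y = t' x_1 + w', the second
   component of the bracket is t w' - t' w, as for F x_1 acting on W + W by
   (w, w') |-> ([x_1,w], w); the second components are central. *)
Definition cover : lsData F := @LSData F (ev L * ev L)%type (od L * od L)%type
  (fun x y => (b00 x.1 y.1, xcoord x.1 *: y.1 - xcoord y.1 *: x.1))
  (fun x u => (b01 x.1 u.1, xcoord x.1 *: u.1))
  (fun u v => (b11 u.1 v.1, 0)).

Lemma cover_lie : isLieSuper cover.
Proof.
have z0 : (inord 0 == ord_max :> 'I_(1.*2).+1) = false by rewrite -val_eqE /= inordK.
have z1 : (inord 1 == ord_max :> 'I_(1.*2).+1) = false by rewrite -val_eqE /= inordK.
rewrite /isLieSuper /bilin /=; repeat split; intros;
  repeat (apply: pair_ext; rewrite /= /xcoord /zvec /=); apply/rowP => j;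
  rewrite ?big_ord1 ?big_ord0 !mxE /= ?addn0 ?z0 ?z1 /=; ring.
Qed.

Lemma cover_center_ev (x : ev cover) : center_ev x <-> x.1 = 0.
Proof.
split=> [[central _] | x1_eq0].
  have ex1 : xcoord (hvec 0, 0) = 1 by rewrite /xcoord hvecE.
  have xx1 : xcoord x.1 = 0.
    have /eqP : b00 x.1 (hvec 1, 0) = 0 := congr1 fst (central ((hvec 1, 0), 0)).
    rewrite heis_sum_b00 xpair_eqE eqxx andbT zvec_eq0.
    by rewrite /= symp_antisym symp_hvec_shift // opprK => /eqP.
  have /(congr1 snd) /= := central ((hvec 0, 0), 0).
  by rewrite xx1 ex1 scale0r scale1r sub0r => /eqP; rewrite oppr_eq0 => /eqP.
case: x x1_eq0 => [x x'] /= ->; split=> [y | u];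
  repeat (apply: pair_ext; rewrite /= /xcoord /zvec /=); apply/rowP => j;
  rewrite ?big_ord1 ?big_ord0 !mxE /=; ring.
Qed.

Lemma cover_center_od (u : od cover) : center_od u <-> u.1 = 0.
Proof.
split=> [[central _] | u1_eq0].
  have /(congr1 snd) /= := central ((hvec 0, 0), 0).
  by rewrite /xcoord hvecE // scale1r.
case: u u1_eq0 => [u u'] /= ->; split=> [x | v];
  repeat (apply: pair_ext; rewrite /= /xcoord /zvec /=); apply/rowP => j;
  rewrite ?big_ord1 ?big_ord0 !mxE /=; ring.
Qed.

Lemma capable_heis_sum_10 : capable L.
Proof.
exists cover; split; first exact: cover_lie.
exists fst, fst; do 2 split=> //.
split; first by move=> y; exists (y, 0).
split; first by move=> v; exists (v, 0).
do 3 split=> //.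
by split=> x; apply: iff_sym; [apply: cover_center_ev | apply: cover_center_od].
Qed.
End Cover.

Theorem mainTheorem4 (F : fieldType) (hF2 : 2%:R != 0 :> F) (hF3 : 3%:R != 0 :> F)
  (m n r s : nat) (hmn : (1 <= m + n)%N) (hrs : (1 <= r + s)%N) :
  capable (lsSum (heis F m n) (abel F r s)) <-> (m = 1%N /\ n = 0%N).
Proof.
split=> [capL | [-> ->]]; last exact: capable_heis_sum_10.
have [n_eq0 | n_gt0] := posnP n; last first.
  by case: (heis_sum_not_capable_odd hF3 n_gt0 capL).
have [m_le1 | m_ge2] := leqP m 1; last first.
  by case: (heis_sum_not_capable_even m_ge2 capL).
by split=> //; lia.
Qed.
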